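(* There is an absolute constant $C>0$ with the following property. Let $m\ge1$, $0\le k\le m$, and $\pi\in\mathcal P_{\le2}(m)$, and let $N^1_{k,\pi}(m)$ be the number of involutions $\sigma\in\mathrm{Sym}_m$ that preserve $\pi$ and have exactly $k$ fixed points. Then \[ N^1_{k,\pi}(m)\le C^m(m!)^{\frac12-\frac{\pi_2}{2m}-\frac k{4m}} . \]
   Context: $\mathcal P_{\le2}(m)$ is the set of set partitions of $\{1,\dots,m\}$ with all blocks of size at most $2$, and $\pi_2$ is the number of blocks of size $2$ of $\pi$. A permutation preserves $\pi$ if it maps each block of $\pi$ onto a block of $\pi$. Involutions are elements $\sigma$ with $\sigma^2=1$ (the identity included). *)

From mathcomp Require Import all_boot all_fingroup.
From Stdlib Require Import Reals.

Set Implicit Arguments.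
Unset Strict Implicit.
Unset Printing Implicit Defensive.

Local Open Scope group_scope.

(* P is a set partition of {0,...,m-1} (standing for {1,...,m}) with all
   blocks of size at most 2. *)
Definition le2_partition (m : nat) (P : {set {set 'I_m}}) : bool :=
  partition P [set: 'I_m] && [forall B in P, #|B| <= 2]%N.

Definition pi2 (m : nat) (P : {set {set 'I_m}}) : nat :=
  #|[set B in P | #|B| == 2]|.

Definition preserves (m : nat) (s : {perm 'I_m}) (P : {set {set 'I_m}}) : bool :=
  [forall B in P, (s @: B) \in P].

Definition involution (m : nat) (s : {perm 'I_m}) : bool := s * s == 1.

Definition nfix (m : nat) (s : {perm 'I_m}) : nat := #|[set x | s x == x]|.

Definition N1 (m k : nat) (P : {set {set 'I_m}}) : nat :=
  #|[set s : {perm 'I_m} | [&& involution s, preserves s P & nfix s == k]]|.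

From Stdlib Require Import Reals Lra Lia.
From Coquelicot Require Rcomplements ElemFct.
From mathcomp Require Import all_boot all_fingroup zify.

Set Implicit Arguments.
Unset Strict Implicit.
Unset Printing Implicit Defensive.

(* An involution s preserving P induces an involution on the blocks of P, which
   we index by their least elements.  The fixed points of s lie in the blocks
   fixed by s, and the moved blocks pair up; call the smaller representative of
   each pair rising.  Since #|P| + pi_2 = m, the number r of rising
   representatives satisfies nfix s + 4 r + 2 pi_2 <= 2 m.  Three bits per point
   together with the values of s on the r rising representatives determine s,
   hence N1 <= 8^m m^j with 4 j <= 2 m - 2 pi_2 - k.  Finally
   m^j <= e^m (m!)^(j/m), because m^m / m! is a term of the series of e^m. *)

Lemma involutionK (m : nat) (s : {perm 'I_m}) : involution s -> involutive s.
Proof. by move/eqP=> ss1 x; rewrite -permM ss1 perm1. Qed.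

Lemma involution_eq_at (m : nat) (s1 s2 : {perm 'I_m}) x :
  involution s1 -> involution s2 -> s1 (s1 x) = s2 (s1 x) -> s1 x = s2 x.
Proof.
by move=> s1_inv s2_inv; rewrite involutionK // => /(congr1 s2); rewrite involutionK.
Qed.

Section Le2Partition.

Variables (m : nat) (P : {set {set 'I_m}}).
Hypothesis P_le2 : le2_partition P.

Let P_partition : partition P [set: 'I_m].
Proof. by case/andP: P_le2. Qed.

Let P_cover : cover P = [set: 'I_m].
Proof. by case/and3P: P_partition => /eqP. Qed.

Let P_trivI : trivIset P.
Proof. by case/and3P: P_partition. Qed.

Let set0_notin_P : set0 \notin P.
Proof. by case/and3P: P_partition. Qed.

Let card_block_le2 B : B \in P -> #|B| <= 2.
Proof. by case/andP: P_le2 => _ /forall_inP; apply. Qed.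

Lemma mem_pblock_self x : x \in pblock P x.
Proof. by rewrite mem_pblock P_cover inE. Qed.

Lemma pblock_in x : pblock P x \in P.
Proof. by apply: pblock_mem; rewrite P_cover inE. Qed.

Lemma pblock_eq x y : y \in pblock P x -> pblock P y = pblock P x.
Proof. by move=> yx; apply: def_pblock => //; apply: pblock_in. Qed.

Definition mate x := odflt x [pick y in pblock P x | y != x].

Lemma pblock_mate x : pblock P x = [set x; mate x].
Proof.
rewrite /mate; case: pickP => [y /andP [yx y_neq_x]|no_other] /=.
  apply/eqP; rewrite eq_sym eqEcard cards2 eq_sym y_neq_x card_block_le2 ?pblock_in //.
  by rewrite andbT subUset !sub1set mem_pblock_self.
apply/setP => z; rewrite !inE orbb; apply/idP/eqP => [zx|->]; last exact: mem_pblock_self.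
by apply/eqP; move: (no_other z); rewrite zx; case: eqP.
Qed.

Lemma in_pblock x y : (y \in pblock P x) = (y == x) || (y == mate x).
Proof. by rewrite pblock_mate !inE. Qed.

Lemma mate_in x : mate x \in pblock P x.
Proof. by rewrite in_pblock eqxx orbT. Qed.

Lemma mate_eq x y : y \in pblock P x -> y != x -> mate x = y.
Proof. by rewrite in_pblock => /orP [/eqP->|/eqP->]; rewrite ?eqxx. Qed.

Lemma mateK : involutive mate.
Proof.
move=> x; have [mate_x | mate_neq] := eqVneq (mate x) x; first by rewrite !mate_x.
by apply: mate_eq; rewrite 1?eq_sym // (pblock_eq (mate_in x)) mem_pblock_self.
Qed.

Lemma pblock_perm (s : {perm 'I_m}) x :
  preserves s P -> pblock P (s x) = s @: pblock P x.
Proof.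
move/forall_inP=> sP; apply: def_pblock => //; first exact/sP/pblock_in.
exact/imset_f/mem_pblock_self.
Qed.

Lemma mate_perm (s : {perm 'I_m}) x : preserves s P -> mate (s x) = s (mate x).
Proof.
move=> sP; have [mate_x | mate_neq] := eqVneq (mate x) x.
  have := mate_in (s x); rewrite pblock_perm // => /imsetP [y].
  by rewrite in_pblock mate_x orbb => /eqP -> ->.
by apply: mate_eq; rewrite ?(inj_eq perm_inj) // pblock_perm ?imset_f ?mate_in.
Qed.

Definition rep (x : 'I_m) := if x <= mate x then x else mate x.

Definition reps := [set x : 'I_m | x <= mate x].

Lemma rep_mate (x : 'I_m) : rep (mate x) = rep x.
Proof.
by rewrite /rep mateK; case: leqP => x_le; case: leqP => mate_le //;
  apply: val_inj => /=; lia.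
Qed.

Lemma rep_cases (x : 'I_m) : rep x = x \/ rep x = mate x.
Proof. by rewrite /rep; case: leqP; [left | right]. Qed.

Lemma rep_eq (x y : 'I_m) : rep y = x -> y = x \/ y = mate x.
Proof. by case: (rep_cases y) => -> <-; [left | right; rewrite mateK]. Qed.

Lemma rep_id (x : 'I_m) : x \in reps -> rep x = x.
Proof. by rewrite inE /rep => ->. Qed.

Lemma rep_in (x : 'I_m) : rep x \in reps.
Proof.
by rewrite inE /rep; case: (leqP x (mate x)) => // /ltnW; rewrite mateK.
Qed.

Lemma rep_perm (s : {perm 'I_m}) x : preserves s P -> rep (s (rep x)) = rep (s x).
Proof. by move=> sP; case: (rep_cases x) => -> //; rewrite -mate_perm // rep_mate. Qed.

Lemma card_blocks_add_pi2 : #|P| + pi2 P = m.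
Proof.
have card_blockE B : B \in P -> #|B| = 1 + (#|B| == 2).
  move=> BP; have := card_block_le2 BP; have : 0 < #|B|.
    by rewrite card_gt0; apply: contraNneq set0_notin_P => <-.
  by case: #|B| => [|[|[|]]].
rewrite /pi2 -sum1_card -sum1dep_card big_mkcondr -big_split /=.
transitivity #|[set: 'I_m]|; last by rewrite cardsT card_ord.
rewrite (card_partition P_partition); apply: eq_bigr => B BP.
by rewrite [RHS]card_blockE //; case: eqP.
Qed.

Lemma card_reps : #|reps| = #|P|.
Proof.
have pblock_rep x : pblock P (rep x) = pblock P x.
  by apply: pblock_eq; case: (rep_cases x) => ->; rewrite ?mem_pblock_self ?mate_in.
rewrite -(@card_in_imset _ _ (pblock P)) => [|x y]; last first.
  rewrite !inE => x_le y_le eq_xy; have := mem_pblock_self y; rewrite -eq_xy in_pblock.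
  case/orP=> /eqP y_eq //; apply: val_inj; move: y_le; rewrite y_eq mateK => /=.
  by move: x_le; lia.
apply: eq_card => B; apply/imsetP/idP => [[x _ ->] | BP]; first exact: pblock_in.
have [B0 | [x xB]] := set_0Vmem B; first by move: set0_notin_P; rewrite -B0 BP.
exists (rep x); first exact: rep_in.
by rewrite pblock_rep (def_pblock P_trivI BP xB).
Qed.

Definition fixed_reps (s : {perm 'I_m}) := [set x in reps | rep (s x) == x].
Definition rising_reps (s : {perm 'I_m}) := [set x in reps | x < rep (s x)].
Definition falling_reps (s : {perm 'I_m}) := [set x in reps | rep (s x) < x].

Section PreservingInvolution.

Variable s : {perm 'I_m}.
Hypotheses (s_inv : involution s) (s_pres : preserves s P).

Lemma rep_permK x : x \in reps -> rep (s (rep (s x))) = x.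
Proof. by move=> x_rep; rewrite rep_perm // involutionK // rep_id. Qed.

Lemma card_rising_le_falling : #|rising_reps s| <= #|falling_reps s|.
Proof.
rewrite -(@card_in_imset _ _ (fun x => rep (s x))) => [|x y]; last first.
  move=> /setIdP [x_rep _] /setIdP [y_rep _] eq_xy.
  by rewrite -(rep_permK x_rep) eq_xy rep_permK.
apply/subset_leq_card/subsetP => _ /imsetP [x /setIdP [x_rep x_lt] ->].
by rewrite inE rep_in rep_permK.
Qed.

Lemma nfix_le_fixed_reps : nfix s <= 2 * #|fixed_reps s|.
Proof.
apply: (@leq_trans #|fixed_reps s :|: mate @: fixed_reps s|).
  apply/subset_leq_card/subsetP => x; rewrite inE => /eqP sx.
  have rep_x : rep x \in fixed_reps s by apply/setIdP; rewrite rep_in rep_perm // sx.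
  by case: (rep_eq (erefl (rep x))) => ->; rewrite in_setU ?rep_x ?imset_f ?orbT.
by apply: leq_trans (leq_card_setU _ _) _; rewrite mul2n -addnn leq_add2l leq_imset_card.
Qed.

Lemma card_fixed_rising_falling :
  #|fixed_reps s| + #|rising_reps s| + #|falling_reps s| <= #|reps|.
Proof.
rewrite /fixed_reps /rising_reps /falling_reps.
rewrite -[#|reps|]sum1_card -!sum1dep_card !big_mkcondr -!big_split /=.
by apply: leq_sum => x _; rewrite -val_eqE /=; case: ltngtP.
Qed.

Lemma nfix_rising_pi2_le : nfix s + 4 * #|rising_reps s| + 2 * pi2 P <= 2 * m.
Proof.
have := card_blocks_add_pi2; have := card_reps; have := card_fixed_rising_falling.
have := nfix_le_fixed_reps; have := card_rising_le_falling; lia.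
Qed.

End PreservingInvolution.

Section Reconstruction.

Variables s1 s2 : {perm 'I_m}.
Hypotheses (s1_inv : involution s1) (s1_pres : preserves s1 P).
Hypotheses (s2_inv : involution s2) (s2_pres : preserves s2 P).
Hypothesis same_fixed_block : forall x, (rep (s1 x) == x) = (rep (s2 x) == x).
Hypothesis same_fixed : forall x, (s1 x == x) = (s2 x == x).
Hypothesis agree_rising : {in rising_reps s1, s1 =1 s2}.

Lemma agree_mate x : s1 x = s2 x -> s1 (mate x) = s2 (mate x).
Proof. by rewrite -!mate_perm // => ->. Qed.

(* On a falling representative x, s1 and s2 agree at s1 x, which lies in the
   block of the rising representative rep (s1 x); involutivity does the rest. *)
Lemma agree_reps x : x \in reps -> s1 x = s2 x.
Proof.
move=> x_rep; case: (ltngtP x (rep (s1 x))) => [rising | falling | /val_inj fixed].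
- by apply: agree_rising; apply/setIdP.
- set y := rep (s1 x); have y_rising : y \in rising_reps s1.
    by apply/setIdP; rewrite rep_in rep_permK.
  have agree_y := agree_rising y_rising.
  by apply: involution_eq_at => //; case: (rep_eq (erefl y)) => -> //; apply: agree_mate.
- have fixed2 : rep (s2 x) = x by apply/eqP; rewrite -same_fixed_block -fixed.
  have := same_fixed x.
  case: (rep_eq (esym fixed)) => ->; case: (rep_eq fixed2) => -> //; rewrite eqxx //;
  by [move/esym/eqP | move/eqP].
Qed.

Lemma eq_of_agree : s1 = s2.
Proof.
apply/permP => x; case: (rep_eq (erefl (rep x))) => ->; first exact/agree_reps/rep_in.
exact/agree_mate/agree_reps/rep_in.
Qed.

End Reconstruction.

Definition involution_code j (x0 : 'I_m) (s : {perm 'I_m}) :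
    {ffun 'I_m -> bool * bool * bool} * {ffun 'I_j -> 'I_m} :=
  ([ffun x : 'I_m => (x < rep (s x), rep (s x) == x, s x == x)],
   [ffun i : 'I_j => nth x0 (map s (enum (rising_reps s))) i]).

Lemma involution_code_inj j x0 (s1 s2 : {perm 'I_m}) :
    involution s1 -> preserves s1 P -> involution s2 -> preserves s2 P ->
    #|rising_reps s1| <= j ->
  involution_code j x0 s1 = involution_code j x0 s2 -> s1 = s2.
Proof.
move=> s1_inv s1_pres s2_inv s2_pres rising_le [/ffunP same_bits /ffunP same_images].
have bitsE (x : 'I_m) : (x < rep (s1 x), rep (s1 x) == x, s1 x == x) =
                (x < rep (s2 x), rep (s2 x) == x, s2 x == x).
  by have := same_bits x; rewrite !ffunE.
have same_rising : rising_reps s1 = rising_reps s2.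
  by apply/setP => x; rewrite !inE; case: (bitsE x) => ->.
apply: eq_of_agree => // [x | x | x x_rising]; try by case: (bitsE x).
have x_enum : x \in enum (rising_reps s1) by rewrite mem_enum.
have x_idx : index x (enum (rising_reps s1)) < j.
  by apply: leq_trans rising_le; rewrite cardE index_mem.
have := same_images (Ordinal x_idx); rewrite !ffunE /= -same_rising.
by rewrite !(nth_map x) ?index_mem // nth_index.
Qed.

Lemma N1_le_expn k :
    0 < m -> k <= m ->
  exists2 j, 4 * j + 2 * pi2 P + k <= 2 * m & N1 k P <= 8 ^ m * m ^ j.
Proof.
move=> m_gt0 k_le_m.
have pi2_le_m : 2 * pi2 P <= m.
  rewrite -{2}card_blocks_add_pi2 mul2n -addnn leq_add2r.
  by apply/subset_leq_card/subsetP => B /setIdP [].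
set j := (2 * m - 2 * pi2 P - k) %/ 4.
exists j; first by lia.
have code_inj : {in [set s | [&& involution s, preserves s P & nfix s == k]] &,
    injective (involution_code j (Ordinal m_gt0))}.
  move=> s1 s2; rewrite !inE => /and3P [s1_inv s1_pres /eqP nfix1] /and3P [s2_inv s2_pres _].
  apply: involution_code_inj => //; rewrite leq_divRL //.
  by have := nfix_rising_pi2_le s1_inv s1_pres; rewrite nfix1; lia.
apply: leq_trans (leq_card_in _ _ code_inj) _.
by rewrite card_prod !card_ffun !card_prod !card_bool !card_ord.
Qed.

End Le2Partition.

Local Open Scope R_scope.

Lemma exp_le_exp x y : x <= y -> exp x <= exp y.
Proof. by case=> [/exp_increasing/Rlt_le | ->] //; apply: Rle_refl. Qed.

Lemma factorial_fact n : n`! = Factorial.fact n.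
Proof. by elim: n => // n IH; rewrite factS IH. Qed.

Lemma INR_expn (a n : nat) : INR (a ^ n) = INR a ^ n.
Proof. by elim: n => // n IH; rewrite expnS mult_INR IH. Qed.

Lemma pow_le_exp_mul_fact n : INR n ^ n <= exp (INR n) * INR n`!.
Proof.
have fact_pos := INR_fact_lt_0 n; rewrite factorial_fact.
have term_le : INR n ^ n / INR (Factorial.fact n) <=
    sum_f_R0 (fun k => INR n ^ k / INR (Factorial.fact k)) n.
  case: n fact_pos => [|n] fact_pos; first exact: Rle_refl.
  rewrite tech5 -[X in X <= _]Rplus_0_l; apply: Rplus_le_compat_r; apply: cond_pos_sum => k.
  by apply: Rmult_le_pos; [apply: pow_le; apply: pos_INR | apply/Rlt_le/Rinv_0_lt_compat/INR_fact_lt_0].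
have := Rle_trans _ _ _ term_le (ElemFct.exp_ge_taylor (INR n) n (pos_INR n)).
by move/(Rcomplements.Rle_div_l _ _ _ fact_pos).
Qed.

Lemma pow_le_exp_mul_Rpower_fact (m j : nat) (a : R) :
    (0 < m)%N -> (j <= m)%N -> INR j <= a * INR m ->
  INR m ^ j <= exp 1 ^ m * Rpower (INR m`!) a.
Proof.
move=> m_gt0 j_le_m j_le_am.
have m_pos : 0 < INR m by apply: lt_0_INR; apply/ltP.
have fact_ge1 : 1 <= INR m`! by apply: (le_INR 1); apply/leP; apply: fact_gt0.
have m_ge1 : 1 <= INR m by apply: (le_INR 1); apply/leP.
have j_le_m' : INR j <= INR m by apply/le_INR/leP.
have ln_fact_ge0 : 0 <= ln (INR m`!) by rewrite -ln_1; apply: Rcomplements.ln_le; lra.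
have ln_m_ge0 : 0 <= ln (INR m) by rewrite -ln_1; apply: Rcomplements.ln_le; lra.
have m_ln_m : INR m * ln (INR m) <= INR m + ln (INR m`!).
  rewrite -ln_pow // -[INR m]ln_exp -ln_mult ?ln_exp; last by lra.
    by apply: Rcomplements.ln_le; [apply: pow_lt | apply: pow_le_exp_mul_fact].
  exact: exp_pos.
rewrite -(Rpower_pow _ _ m_pos) -(Rpower_pow _ _ (exp_pos 1)) /Rpower ln_exp Rmult_1_r -exp_plus.
apply: exp_le_exp; apply: (Rmult_le_reg_l (INR m)) => //.
have := Rmult_le_compat_l _ _ _ (pos_INR j) m_ln_m.
have := Rmult_le_compat_r _ _ _ ln_fact_ge0 j_le_am.
have := Rmult_le_compat_r _ _ _ (pos_INR m) j_le_m'.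
lra.
Qed.

Theorem lemma5p2 :
  exists C : R, (0 < C)%R /\
  forall (m k : nat) (P : {set {set 'I_m}}),
    (1 <= m)%N -> (k <= m)%N -> le2_partition P ->
    (INR (N1 k P) <=
       C ^ m * Rpower (INR m`!)
         (1 / 2 - INR (pi2 P) / (2 * INR m) - INR k / (4 * INR m)))%R.
Proof.
exists (8 * exp 1); split; first by have := exp_pos 1; lra.
move=> m k P m_gt0 k_le_m P_le2.
have [j j_bound N1_le] := N1_le_expn P_le2 m_gt0 k_le_m.
have m_pos : 0 < INR m by apply/lt_0_INR/ltP.
apply: Rle_trans (le_INR _ _ (elimT leP N1_le)) _.
have INR_8 : INR 8 = 8 by rewrite /=; lra.
rewrite mult_INR !INR_expn INR_8 Rpow_mult_distr Rmult_assoc.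
apply: Rmult_le_compat_l; first by apply: pow_le; lra.
apply: pow_le_exp_mul_Rpower_fact => //; first by lia.
have -> : (1 / 2 - INR (pi2 P) / (2 * INR m) - INR k / (4 * INR m)) * INR m =
    (2 * INR m - 2 * INR (pi2 P) - INR k) / 4 by field; lra.
by move/leP/le_INR: j_bound; rewrite -!plusE -!multE !plus_INR /=; lra.
Qed.
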